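(* Let $S^{\max}$, $L$, $\mathcal{C}$ and $\mathcal{O}$ be as in the context. For all $\sigma,\sigma'\in\mathbb{T}$ with $\sigma\preceq\sigma'$, we have $\mathcal{O}(\sigma)\supseteq\mathcal{O}(\sigma')$.
   Context: Let $E$ be a set of events. A trace is a finite sequence $\sigma=\sigma_0\cdots\sigma_{n-1}$ ($n\ge 0$) or an infinite sequence $\sigma_0\sigma_1\cdots$ of events; $|\sigma|$ is its length ($\infty$ if infinite) and $\mathbb{T}$ is the set of all traces (including the empty trace). Write $\sigma\preceq\sigma'$ iff $|\sigma|\le|\sigma'|$ and $\sigma_i=\sigma'_i$ for all $0\le i<|\sigma|$ (prefix order). For a finite trace $\sigma$, $\sigma\sigma'$ denotes concatenation. For $P\subseteq\mathbb{T}$, $\mathrm{pf}(P)=\{\sigma'\in\mathbb{T}\mid\exists\sigma\in P.\ \sigma'\preceq\sigma\}$. Fix $S^{\max}\subseteq\mathbb{T}$ and let $S^{\mathrm{pf}}=\mathrm{pf}(S^{\max})$ (valid traces). For $P\subseteq\mathbb{T}$, $\alpha(P)=\{\sigma\in\mathrm{pf}(P)\mid\forall\sigma'\in S^{\max}.\ \sigma\preceq\sigma'\Rightarrow\sigma'\in P\}$. Let $L\subseteq\wp(S^{\max})$ with $S^{\max},\emptyset\in L$ be such that $(L,\subseteq)$ is a complete lattice with top $S^{\max}$, bottom $\emptyset$, join $\sqcup$ and meet $\sqcap$ (least upper bounds / greatest lower bounds in $L$ w.r.t. $\subseteq$, not necessarily $\cup,\cap$). The inquiry function is $\mathcal{I}(\sigma)=\sqcap\{P\in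 L\mid \sigma\in\alpha(P)\}$ for $\sigma\in S^{\mathrm{pf}}$, and $\mathcal{I}(\sigma)=\emptyset$ for $\sigma\notin S^{\mathrm{pf}}$. A cognizance function is a map $\mathcal{C}:\mathbb{T}\to\wp(\mathbb{T})$ that is extensive ($\sigma\in\mathcal{C}(\sigma)$ for all $\sigma$), satisfies $\mathcal{C}(\sigma\sigma')=\{\tau\tau'\mid\tau\in\mathcal{C}(\sigma),\tau'\in\mathcal{C}(\sigma')\}$ for all $\sigma,\sigma'$, and satisfies $\sigma\notin S^{\mathrm{pf}}\Rightarrow\mathcal{C}(\sigma)\cap S^{\mathrm{pf}}=\emptyset$. The observation function is $\mathcal{O}(\sigma)=\sqcup\{\mathcal{I}(\sigma')\mid\sigma'\in\mathcal{C}(\sigma)\}$. *)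

From Stdlib Require Import Arith.

(* A trace over events E: a finite or infinite sequence, encoded as a map
   nat -> option E which, once undefined (None), stays undefined.
   The length is the first index where it is None (infinite if never). *)
Definition trace (E : Type) :=
  { f : nat -> option E | forall n, f n = None -> f (S n) = None }.

Definition tr {E : Type} (s : trace E) : nat -> option E := proj1_sig s.

Definition tset (E : Type) := trace E -> Prop.

Definition tsubset {E : Type} (P Q : tset E) : Prop := forall x, P x -> Q x.

Definition tempty {E : Type} : tset E := fun _ => False.

Definition prefix {E : Type} (s s' : trace E) : Prop :=
  forall i e, tr s i = Some e -> tr s' i = Some e.

Definition len_is {E : Type} (s : trace E) (n : nat) : Prop :=
  tr s n = None /\ forall k, k < n -> tr s k <> None.

Definition finite_trace {E : Type} (s : trace E) : Prop := exists n, len_is s n.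

Definition is_concat {E : Type} (s s' r : trace E) : Prop :=
  exists n, len_is s n /\
    forall i, tr r i = (if i <? n then tr s i else tr s' (i - n)).

Definition pf {E : Type} (P : tset E) : tset E :=
  fun s' => exists s, P s /\ prefix s' s.

Definition alpha {E : Type} (Smax : tset E) (P : tset E) : tset E :=
  fun s => pf P s /\ forall s', Smax s' -> prefix s s' -> P s'.

Definition is_lub {E : Type} (L : tset E -> Prop) (X : tset E -> Prop) (U : tset E) : Prop :=
  L U /\ (forall Q, X Q -> tsubset Q U) /\
  (forall V, L V -> (forall Q, X Q -> tsubset Q V) -> tsubset U V).

Definition is_glb {E : Type} (L : tset E -> Prop) (X : tset E -> Prop) (U : tset E) : Prop :=
  L U /\ (forall Q, X Q -> tsubset U Q) /\
  (forall V, L V -> (forall Q, X Q -> tsubset V Q) -> tsubset V U).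

Definition complete_lattice_on {E : Type} (Smax : tset E) (L : tset E -> Prop)
    (join meet : (tset E -> Prop) -> tset E) : Prop :=
  L Smax /\ L tempty /\ (forall P, L P -> tsubset P Smax) /\
  (forall X, (forall P, X P -> L P) -> is_lub L X (join X) /\ is_glb L X (meet X)).

Definition inquiry {E : Type} (Smax : tset E) (L : tset E -> Prop)
    (meet : (tset E -> Prop) -> tset E) (s : trace E) : tset E :=
  fun x => pf Smax s /\ meet (fun P => L P /\ alpha Smax P s) x.

Definition cognizance {E : Type} (Smax : tset E) (C : trace E -> tset E) : Prop :=
  (forall s, C s s) /\
  (forall s s' r, is_concat s s' r ->
     forall x, C r x <-> exists t t', C s t /\ C s' t' /\ is_concat t t' x) /\
  (forall s, ~ pf Smax s -> forall x, C s x -> ~ pf Smax x).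

Definition observation {E : Type} (Smax : tset E) (L : tset E -> Prop)
    (join meet : (tset E -> Prop) -> tset E) (C : trace E -> tset E)
    (s : trace E) : tset E :=
  join (fun P => exists s', C s s' /\ P = inquiry Smax L meet s').

(* Inquiry
   is antitone for the prefix order: if t ⪯ x, every P with t ∈ α(P) also has
   x ∈ α(P), so the meet defining I(x) ranges over a larger family.  Cognizance
   respects prefixes: a prefix s of s' is either s' itself or a left factor
   s' = s s'', and then every element of C(s') = C(s) C(s'') extends some
   element of C(s).  Hence every I(x), x ∈ C(s'), lies below some I(t),
   t ∈ C(s), and O(s') ⊆ O(s) by the least-upper-bound property. *)
From Stdlib Require Import Arith Lia Classical FunctionalExtensionality
  PropExtensionality ProofIrrelevance.

Section Traces.

Context {E : Type}.
Implicit Types s t x : trace E.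

Lemma trace_ext s s' : tr s = tr s' -> s = s'.
Proof.
  destruct s as [f Hf], s' as [f' Hf']; unfold tr; simpl; intros <-.
  f_equal; apply proof_irrelevance.
Qed.

Lemma tr_none_le s k j : tr s k = None -> k <= j -> tr s j = None.
Proof.
  intros Hk Hkj; induction Hkj as [|j _ IH]; [exact Hk|].
  exact (proj2_sig s j IH).
Qed.

Lemma finite_trace_of_none s n : tr s n = None -> finite_trace s.
Proof.
  induction n as [|n IH]; intros Hn.
  - exists 0; split; [exact Hn | intros k Hk; lia].
  - destruct (tr s n) as [e|] eqn:He; [|exact (IH eq_refl)].
    exists (S n); split; [exact Hn|].
    intros k Hk Hnone.
    assert (tr s n = None) by (apply (tr_none_le s k); [exact Hnone | lia]).
    congruence.
Qed.

Lemma prefix_refl s : prefix s s.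
Proof. intros i e; auto. Qed.

Lemma prefix_trans s t x : prefix s t -> prefix t x -> prefix s x.
Proof. unfold prefix; auto. Qed.

Lemma is_concat_prefix t t' x : is_concat t t' x -> prefix t x.
Proof.
  intros [m [[Hm _] Hx]] i e He; rewrite Hx.
  destruct (i <? m) eqn:Hi; [exact He|].
  apply Nat.ltb_ge in Hi.
  rewrite (tr_none_le t m i Hm Hi) in He; discriminate.
Qed.

Definition trace_drop (m : nat) s : trace E :=
  exist (fun f => forall n, f n = None -> f (S n) = None)
    (fun i => tr s (i + m)) (fun i => proj2_sig s (i + m)).

Lemma is_concat_drop s s' m :
  len_is s m -> prefix s s' -> is_concat s (trace_drop m s') s'.
Proof.
  intros [Hm Hlt] Hp; exists m; split; [split; assumption|].
  intros i; destruct (i <? m) eqn:Hi.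
  - apply Nat.ltb_lt in Hi.
    destruct (tr s i) as [e|] eqn:He; [exact (Hp i e He)|].
    exfalso; exact (Hlt i Hi He).
  - apply Nat.ltb_ge in Hi; simpl; f_equal; lia.
Qed.

Lemma prefix_infinite_eq s s' :
  (forall n, tr s n <> None) -> prefix s s' -> s = s'.
Proof.
  intros Hinf Hp; apply trace_ext, functional_extensionality; intros n.
  destruct (tr s n) as [e|] eqn:He.
  - symmetry; exact (Hp n e He).
  - exfalso; exact (Hinf n He).
Qed.

Lemma prefix_split s s' :
  prefix s s' -> s = s' \/ exists s'', is_concat s s'' s'.
Proof.
  intros Hp; destruct (classic (exists n, tr s n = None)) as [[n Hn]|Hinf].
  - right; destruct (finite_trace_of_none s n Hn) as [m Hm].
    exists (trace_drop m s'); exact (is_concat_drop s s' m Hm Hp).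
  - left; apply prefix_infinite_eq; [|exact Hp].
    intros n Hn; exact (Hinf (ex_intro _ n Hn)).
Qed.

Lemma pf_prefix (P : tset E) t x : pf P x -> prefix t x -> pf P t.
Proof.
  intros [m [Hm Hxm]] Htx; exists m; split; [exact Hm|].
  exact (prefix_trans t x m Htx Hxm).
Qed.

End Traces.

Lemma cognizance_prefix {E} (Smax : tset E) (C : trace E -> tset E) s s' x :
  cognizance Smax C -> prefix s s' -> C s' x -> exists t, C s t /\ prefix t x.
Proof.
  intros [Cext [Ccat _]] Hp Hx.
  destruct (prefix_split s s' Hp) as [<-|[s'' Hc]].
  - exists x; split; [exact Hx | apply prefix_refl].
  - apply (Ccat _ _ _ Hc) in Hx; destruct Hx as [t [t' [Ht [_ Htt']]]].
    exists t; split; [exact Ht | exact (is_concat_prefix t t' x Htt')].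
Qed.

Section Bounds.

Context {E : Type} (L : tset E -> Prop).

Lemma tsubset_trans (P Q R : tset E) : tsubset P Q -> tsubset Q R -> tsubset P R.
Proof. unfold tsubset; auto. Qed.

Lemma glb_antitone (X Y : tset E -> Prop) (U V : tset E) :
  is_glb L X U -> is_glb L Y V -> (forall Q, X Q -> Y Q) -> tsubset V U.
Proof.
  intros [_ [_ Ugreatest]] [LV [Vlower _]] XY.
  apply Ugreatest; [exact LV|].
  intros Q XQ; exact (Vlower Q (XY Q XQ)).
Qed.

Lemma lub_cofinal (X Y : tset E -> Prop) (U V : tset E) :
  is_lub L X U -> is_lub L Y V ->
  (forall Q, Y Q -> exists P, X P /\ tsubset Q P) -> tsubset V U.
Proof.
  intros [LU [Uupper _]] [_ [_ Vleast]] YX.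
  apply Vleast; [exact LU|].
  intros Q YQ; destruct (YX Q YQ) as [P [XP QP]].
  exact (tsubset_trans Q P U QP (Uupper P XP)).
Qed.

End Bounds.

Section Inquiry.

Context {E : Type} {Smax : tset E} {L : tset E -> Prop}
  {join meet : (tset E -> Prop) -> tset E}.
Hypothesis HL : complete_lattice_on Smax L join meet.

Definition alpha_family (s : trace E) (P : tset E) : Prop :=
  L P /\ alpha Smax P s.

Lemma alpha_prefix (P : tset E) t x :
  alpha Smax P t -> prefix t x -> pf Smax x -> alpha Smax P x.
Proof.
  intros [_ HtP] Htx [m [Hm Hxm]]; split.
  - exists m; split; [|exact Hxm].
    exact (HtP m Hm (prefix_trans t x m Htx Hxm)).
  - intros m' Hm' Hxm'; exact (HtP m' Hm' (prefix_trans t x m' Htx Hxm')).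
Qed.

Lemma meet_alpha_glb s :
  is_glb L (alpha_family s) (meet (alpha_family s)).
Proof.
  destruct HL as [_ [_ [_ Hcompl]]].
  apply (Hcompl (alpha_family s)); intros P [LP _]; exact LP.
Qed.

Lemma inquiry_in_L s : L (inquiry Smax L meet s).
Proof.
  destruct (classic (pf Smax s)) as [Hs|Hs].
  - replace (inquiry Smax L meet s) with (meet (alpha_family s)).
    + exact (proj1 (meet_alpha_glb s)).
    + apply functional_extensionality; intros y.
      apply propositional_extensionality; unfold inquiry; tauto.
  - replace (inquiry Smax L meet s) with (@tempty E); [exact (proj1 (proj2 HL))|].
    apply functional_extensionality; intros y.
    apply propositional_extensionality; unfold inquiry, tempty; tauto.
Qed.

Lemma inquiry_antitone t x :
  prefix t x -> tsubset (inquiry Smax L meet x) (inquiry Smax L meet t).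
Proof.
  intros Htx y [Hx Hy]; split; [exact (pf_prefix Smax t x Hx Htx)|].
  revert y Hy; apply (glb_antitone L (alpha_family t) (alpha_family x));
    [apply meet_alpha_glb | apply meet_alpha_glb |].
  intros P [LP HtP]; split; [exact LP|].
  exact (alpha_prefix P t x HtP Htx Hx).
Qed.

Definition inquiries_of (C : trace E -> tset E) (s : trace E) (P : tset E) : Prop :=
  exists s0, C s s0 /\ P = inquiry Smax L meet s0.

Lemma observation_lub (C : trace E -> tset E) s :
  is_lub L (inquiries_of C s) (observation Smax L join meet C s).
Proof.
  destruct HL as [_ [_ [_ Hcompl]]].
  apply (Hcompl (inquiries_of C s)).
  intros P [s0 [_ ->]]; apply inquiry_in_L.
Qed.

End Inquiry.

Theorem lemma3 (E : Type) (Smax : tset E) (L : tset E -> Prop)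
    (join meet : (tset E -> Prop) -> tset E) (C : trace E -> tset E) :
  complete_lattice_on Smax L join meet ->
  cognizance Smax C ->
  forall s s' : trace E, prefix s s' ->
    tsubset (observation Smax L join meet C s') (observation Smax L join meet C s).
Proof.
  intros HL HC s s' Hp.
  apply (lub_cofinal L _ _ _ _ (observation_lub HL C s) (observation_lub HL C s')).
  intros Q [x [Hx ->]].
  destruct (cognizance_prefix Smax C s s' x HC Hp Hx) as [t [Ht Htx]].
  exists (inquiry Smax L meet t); split.
  - exists t; split; [exact Ht | reflexivity].
  - exact (inquiry_antitone HL t x Htx).
Qed.
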